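(* Let $\mathbb{F}$ be a finite field and let $n_x,n_y,m$ be positive integers with $n_x+n_y\le m$. Let $B\in\mathcal{B}(n_x,n_y,m)$ be a bilinear sequence whose quadratic homogeneous part $\tilde{B}\in\mathcal{B}^{(h)}(n_x,n_y,m)$ is $\mathbf{y}$-semiregular. Then $$d_{\mathbf{y}\text{-}ff}(B)=\min\left\{d\in\mathbb{Z}^+ \;:\; d>\frac{n_x(n_y-1)}{m-n_x}+1\right\}.$$
   Context: Variables $\mathbf{x}=(x_1,\dots,x_{n_x})$, $\mathbf{y}=(y_1,\dots,y_{n_y})$. A bilinear polynomial is $f=\mathbf{x}\mathbf{A}\mathbf{y}^{\top}+\mathbf{b}\mathbf{x}^{\top}+\mathbf{c}\mathbf{y}^{\top}+d$ with $\mathbf{A}\in\mathbb{F}^{n_x\times n_y}$, $\mathbf{b}\in\mathbb{F}^{n_x}$, $\mathbf{c}\in\mathbb{F}^{n_y}$, $d\in\mathbb{F}$; its quadratic homogeneous part is $\mathbf{x}\mathbf{A}\mathbf{y}^{\top}$. $\mathcal{B}(n_x,n_y,m)$ is the set of length-$m$ sequences of bilinear polynomials and $\mathcal{B}^{(h)}(n_x,n_y,m)$ those with zero linear and constant parts; $\tilde B=(\tilde f_1,\dots,\tilde f_m)$ is the sequence of quadratic parts of $B$. For $j\ge2$, $\mathbf{M}_{\mathbf{y},j}(\tilde B)$ is the matrix whose rows are the coefficient vectors of the $m\binom{n_y+j-3}{j-2}$ polynomials $\mathfrak{m}\tilde f_i$, $1\le i\le m$, $\mathfrak{m}$ a monomial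 of $\mathbb{F}[\mathbf{y}]$ of degree exactly $j-2$. $\tilde B$ is $\mathbf{y}$-$d$-regular if $\mathrm{Rank}(\mathbf{M}_{\mathbf{y},j}(\tilde B))=m\binom{n_y+j-3}{j-2}$ for $j=2,\dots,d$; $d_{\mathbf{y},reg}(\tilde B)$ is the minimum $d$ with $\mathrm{Rank}(\mathbf{M}_{\mathbf{y},d}(\tilde B))=n_x\binom{n_y+d-2}{d-1}$; $\tilde B$ is $\mathbf{y}$-semiregular if it is $\mathbf{y}$-$d$-regular for all $d<d_{\mathbf{y},reg}(\tilde B)$. A syzygy of $\tilde B$ is $(g_1,\dots,g_m)$ with $\sum g_i\tilde f_i=0$; it is trivial if it lies in the $\mathbb{F}[\mathbf{x},\mathbf{y}]$-module generated by $\tilde f_i\mathbf{e}_j-\tilde f_j\mathbf{e}_i$ ($1\le i<j\le m$, $\mathbf{e}_i$ the standard basis vectors). $B$ has a $\mathbf{y}$-degree fall at degree $d$ if there is a sequence $G\in\mathbb{F}[\mathbf{y}]^m$ of homogeneous polynomials of degree $d-2$ which is a non-trivial syzygy of $\tilde B$; the $\mathbf{y}$-first fall degree $d_{\mathbf{y}\text{-}ff}(B)$ is the smallest such $d$. *)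

From HB Require Import structures.
From mathcomp Require Import all_boot all_order all_algebra.
From mathcomp Require Import mpoly.
Set Implicit Arguments. Unset Strict Implicit. Unset Printing Implicit Defensive.
Import Order.TTheory GRing.Theory Num.Theory.
Local Open Scope ring_scope.

Section Bilinear.
Variables (F : fieldType) (nx ny : nat).

Definition xvar (k : 'I_nx) : {mpoly F[nx + ny]} := 'X_(lshift ny k).
Definition yvar (l : 'I_ny) : {mpoly F[nx + ny]} := 'X_(rshift nx l).

(* A bilinear polynomial  x A y^T + b x^T + c y^T + d, given by its data. *)
Record bilin := Bilin {
  bA : 'M[F]_(nx, ny);
  bb : 'rV[F]_nx;
  bc : 'rV[F]_ny;
  bd : F }.

Definition bpoly (f : bilin) : {mpoly F[nx + ny]} :=
  \sum_(k < nx) \sum_(l < ny) bA f k l *: (xvar k * yvar l)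
  + \sum_(k < nx) bb f 0 k *: xvar k
  + \sum_(l < ny) bc f 0 l *: yvar l
  + (bd f)%:MP.

Definition quad (f : bilin) : bilin := Bilin (bA f) 0 0 0.

Definition ymono (mm : 'X_{1..ny}) : {mpoly F[nx + ny]} :=
  \prod_(l < ny) yvar l ^+ mm l.

Definition ymon_deg (k : nat) := {mm : 'X_{1..ny < k.+1} | mdeg mm == k}.

Variable m : nat.

Notation My_rows j := ('I_m * {mm : 'X_{1..ny < (j - 2).+1} | mdeg mm == (j - 2)%N})%type.
(* columns: all monomials of F[x,y] of total degree <= j; the products
   m * f_i (bidegree (1, j-1)) are supported on these, and extra zero
   columns do not change the rank *)
Notation My_cols j := ('X_{1..(nx + ny) < j.+1}).

Definition My (j : nat) (Bt : 'I_m -> bilin) :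
    'M[F]_(#|{: My_rows j}|, #|{: My_cols j}|) :=
  \matrix_(r, c)
    let rr : My_rows j := enum_val r in
    let cc : My_cols j := enum_val c in
    (ymono (val rr.2) * bpoly (Bt rr.1))@_(bmnm cc).

Definition y_d_regular (Bt : 'I_m -> bilin) (d : nat) : Prop :=
  forall j, (2 <= j <= d)%N ->
    \rank (My j Bt) = (m * 'C(ny + j - 3, j - 2))%N.

Definition My_full_col (Bt : 'I_m -> bilin) (d : nat) : Prop :=
  \rank (My d Bt) = (nx * 'C(ny + d - 2, d - 1))%N.

Definition is_dyreg (Bt : 'I_m -> bilin) (d : nat) : Prop :=
  (2 <= d)%N /\ My_full_col Bt d /\
  forall d', (2 <= d' < d)%N -> ~ My_full_col Bt d'.

Definition y_semiregular (Bt : 'I_m -> bilin) : Prop :=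
  exists d0, is_dyreg Bt d0 /\ forall d, (d < d0)%N -> y_d_regular Bt d.

Definition is_syzygy (Bt : 'I_m -> bilin) (g : 'I_m -> {mpoly F[nx + ny]}) :=
  \sum_(i < m) g i * bpoly (Bt i) = 0.

Definition trivial_syzygy (Bt : 'I_m -> bilin) (g : 'I_m -> {mpoly F[nx + ny]}) :=
  exists h : 'I_m -> 'I_m -> {mpoly F[nx + ny]},
    forall k : 'I_m,
      g k = \sum_(i < m) \sum_(j < m | (i < j)%N)
              h i j * (bpoly (Bt i) * (j == k)%:R - bpoly (Bt j) * (i == k)%:R).

Definition is_ypoly (p : {mpoly F[nx + ny]}) : Prop :=
  forall mm, mm \in msupp p -> forall k : 'I_nx, mm (lshift ny k) = 0%N.

Definition y_degree_fall (B : 'I_m -> bilin) (d : nat) : Prop :=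
  (2 <= d)%N /\
  exists g : 'I_m -> {mpoly F[nx + ny]},
    (forall i, is_ypoly (g i) /\ g i \is (d - 2).-homog) /\
    is_syzygy (fun i => quad (B i)) g /\
    ~ trivial_syzygy (fun i => quad (B i)) g.

Definition y_first_fall_degree (B : 'I_m -> bilin) (d : nat) : Prop :=
  y_degree_fall B d /\ forall d', (d' < d)%N -> ~ y_degree_fall B d'.

End Bilinear.

From HB Require Import structures.
From mathcomp Require Import all_boot all_order all_algebra.
From mathcomp Require Import mpoly.
From mathcomp Require Import zify.
Import Order.TTheory GRing.Theory Num.Theory.
Local Open Scope ring_scope.
Set Implicit Arguments. Unset Strict Implicit. Unset Printing Implicit Defensive.

(* A vector in the left kernel of M_{y,j} is the same thing as a syzygy (g_1, ..., g_m) of the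
   quadratic parts with every g_i in F[y] homogeneous of degree j - 2.  The substitution x := 0
   kills every trivial syzygy, since each f_i is a multiple of the x-variables, but fixes
   polynomials in y alone; so such a syzygy is trivial only when it vanishes, and B has a
   y-degree fall at j exactly when the rows of M_{y,j} are dependent.  There are
   m C(ny+j-3, j-2) rows, while M_{y,j} factors through the nx C(ny+j-2, j-1) monomials
   x_k y^b of bidegree (1, j-1); the second number is the smaller one exactly when
   j > nx(ny-1)/(m-nx) + 1, which forces a fall.  Below that bound y-semiregularity gives full
   row rank: before d_reg by definition, and at d_reg because full column rank there makes the
   two numbers equal, which also rules out any larger degree below the bound. *)

Section YMonomials.
Variables (F : fieldType) (nx ny : nat).

Definition ymnm (mm : 'X_{1..ny}) : 'X_{1..nx + ny} :=
  [multinom if split i is inr l then mm l else 0%N | i < nx + ny].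

Lemma ymnm_lshift mm k : ymnm mm (lshift ny k) = 0%N.
Proof. by rewrite mnmE (unsplitK (inl k : 'I_nx + 'I_ny)). Qed.

Lemma ymnm_rshift mm l : ymnm mm (rshift nx l) = mm l.
Proof. by rewrite mnmE (unsplitK (inr l : 'I_nx + 'I_ny)). Qed.

Lemma ymnm_inj : injective ymnm.
Proof.
move=> m1 m2 /mnmP e; apply/mnmP => l.
by have := e (rshift nx l); rewrite !ymnm_rshift.
Qed.

Lemma ymnmD m1 m2 : ymnm (m1 + m2) = (ymnm m1 + ymnm m2)%MM.
Proof.
apply/mnmP => i; case: (split_ordP i) => k ->.
  by rewrite !mnmDE !ymnm_lshift.
by rewrite !mnmDE !ymnm_rshift mnmDE.
Qed.

Lemma ymnm1 l : ymnm U_(l)%MM = U_(rshift nx l)%MM.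
Proof.
apply/mnmP => i; case: (split_ordP i) => k ->; rewrite ?ymnm_lshift ?ymnm_rshift !mnm1E.
  by rewrite eq_rlshift.
by rewrite eq_rshift.
Qed.

Lemma mdeg_ymnm mm : mdeg (ymnm mm) = mdeg mm.
Proof.
rewrite !mdegE big_split_ord /= big1 ?add0n => [|k _]; last exact: ymnm_lshift.
by apply: eq_bigr => l _; rewrite ymnm_rshift.
Qed.

Lemma ymonoE mm : ymono F nx mm = 'X_[ymnm mm].
Proof.
rewrite mpolyXE_id big_split_ord /= big1 ?mul1r => [|k _]; last by rewrite ymnm_lshift.
by apply: eq_bigr => l _; rewrite ymnm_rshift.
Qed.

Lemma ymono_homog (mm : 'X_{1..ny}) : ymono F nx mm \is (mdeg mm).-homog.
Proof. by rewrite ymonoE dhomogX /= mdeg_ymnm. Qed.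

Definition yproj (c : 'X_{1..nx + ny}) : 'X_{1..ny} :=
  [multinom c (@rshift nx ny l) | l < ny].

Lemma yprojK (c : 'X_{1..nx + ny}) :
  (forall k, c (lshift ny k) = 0%N) -> ymnm (yproj c) = c.
Proof.
move=> c_x; apply/mnmP => i; case: (split_ordP i) => k ->.
  by rewrite ymnm_lshift c_x.
by rewrite ymnm_rshift mnmE.
Qed.

Local Notation ymon k := (ymon_deg ny k).

Lemma card_ymon_deg k : (0 < ny)%N -> #|{: ymon k}| = 'C(k + ny.-1, k).
Proof.
case: ny => // n _.
rewrite card_sig cardE -(size_basis n k).
rewrite -(size_map (fun b : 'X_{1..n.+1 < k.+1} => bmnm b)).
apply: perm_size; apply: uniq_perm.
- by rewrite map_inj_uniq ?enum_uniq //; apply: val_inj.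
- exact: uniq_basis.
move=> x; rewrite -basis_cover; apply/mapP/idP => [[b]|x_k].
  by rewrite mem_enum inE => b_k ->.
have x_lt : (mdeg x < k.+1)%N by rewrite (eqP x_k).
by exists (BMultinom x_lt); rewrite // mem_enum inE.
Qed.

Lemma sum_ymon_deg_pred1 k (mu0 : 'X_{1..ny}) (G : 'X_{1..ny} -> F) :
  mdeg mu0 = k -> (forall mu, mu != mu0 -> G mu = 0) ->
  \sum_(b : ymon k) G (val (val b)) = G mu0.
Proof.
move=> mu0_k G0.
have mu0_lt : (mdeg mu0 < k.+1)%N by rewrite mu0_k.
have mu0_eq : (mdeg (BMultinom mu0_lt) == k)%N by rewrite /= mu0_k.
rewrite (bigD1 (@exist 'X_{1..ny < k.+1} _ _ mu0_eq : ymon k)) //= big1 ?addr0 //.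
move=> b nb; apply: G0.
by apply: contra nb => /eqP e; apply/eqP; do 2 apply: val_inj.
Qed.

Lemma ypoly_homogE (p : {mpoly F[nx + ny]}) k : is_ypoly p -> p \is k.-homog ->
  p = \sum_(b : ymon k) p@_(ymnm (val (val b))) *: ymono F nx (val (val b)).
Proof.
move=> p_y p_k; apply/mpolyP => c; rewrite raddf_sum /=.
under eq_bigr do rewrite mcoeffZ ymonoE mcoeffX.
have [c_supp|c_supp] := boolP (c \in msupp p); last first.
  rewrite memN_msupp_eq0 // big1 // => b _.
  by case: eqP => [->|]; rewrite ?(memN_msupp_eq0 c_supp) ?mul0r ?mulr0.
have c_x := p_y c c_supp; have c_deg := dhomog_mf p_k c_supp.
rewrite (@sum_ymon_deg_pred1 k (yproj c) (fun mu => p@_(ymnm mu) * (ymnm mu == c)%:R)).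
- by rewrite yprojK // eqxx mulr1.
- by rewrite -mdeg_ymnm yprojK.
move=> mu /negP mu_neq; case: eqP => [e|]; last by rewrite mulr0.
by case: mu_neq; apply/eqP/ymnm_inj; rewrite e yprojK.
Qed.

End YMonomials.

Section QuadraticPart.
Variables (F : fieldType) (nx ny : nat).

Definition xymnm (k : 'I_nx) (b : 'X_{1..ny}) : 'X_{1..nx + ny} :=
  (U_(lshift ny k) + ymnm nx b)%MM.

Lemma bpoly_quad (f : bilin F nx ny) : bpoly (quad f) =
  \sum_(k < nx) \sum_(l < ny) bA f k l *: 'X_[U_(lshift ny k) + U_(rshift nx l)].
Proof.
have zero_lin n (c : 'rV[F]_n) (v : 'I_n -> {mpoly F[nx + ny]}) :
  c = 0 -> \sum_(i < n) c 0 i *: v i = 0.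
  by move=> ->; apply: big1 => i _; rewrite mxE scale0r.
rewrite /bpoly /= !zero_lin // !addr0.
by apply: eq_bigr => k _; apply: eq_bigr => l _; rewrite mpolyXD.
Qed.

Lemma quad_homog (f : bilin F nx ny) : bpoly (quad f) \is 2.-homog.
Proof.
rewrite bpoly_quad; apply: rpred_sum => k _; apply: rpred_sum => l _.
by apply: rpredZ; rewrite dhomogX /= mdegD !mdeg1.
Qed.

Lemma mcoeff_ymono_quad mm (f : bilin F nx ny) c :
  (ymono F nx mm * bpoly (quad f))@_c =
  \sum_(k < nx) \sum_(l < ny) bA f k l * (xymnm k (mm + U_(l)) == c)%:R.
Proof.
rewrite ymonoE bpoly_quad mulr_sumr raddf_sum; apply: eq_bigr => k _.
rewrite mulr_sumr raddf_sum; apply: eq_bigr => l _.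
rewrite -scalerAr -mpolyXD /= mcoeffZ mcoeffX /xymnm ymnmD ymnm1.
by congr (_ * (_ == _)%:R); apply/mnmP => i; rewrite !mnmDE; lia.
Qed.

End QuadraticPart.

Section TrivialSyzygies.
Variables (F : fieldType) (nx ny : nat).

Definition xzero_tuple : (nx + ny).-tuple {mpoly F[nx + ny]} :=
  [tuple if (i < nx)%N then 0 else 'X_i | i < nx + ny].
Local Notation xzero := (comp_mpoly xzero_tuple).

Lemma xzero_ypoly p : is_ypoly p -> xzero p = p.
Proof.
move=> p_y; rewrite comp_mpolyEX [RHS]mpolyE; apply: eq_big_seq => mm mm_supp.
rewrite comp_mpolyX mpolyXE_id !big_split_ord /=; congr (_ *: (_ * _)).
  by apply: eq_bigr => k _; rewrite p_y ?expr0.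
by apply: eq_bigr => l _; rewrite tnth_mktuple ltnNge leq_addr.
Qed.

Lemma xzero_quad (f : bilin F nx ny) : xzero (bpoly (quad f)) = 0.
Proof.
rewrite bpoly_quad raddf_sum big1 // => k _; rewrite raddf_sum big1 // => l _.
rewrite /= comp_mpolyZ mpolyXD rmorphM /= comp_mpolyXU -tnth_nth tnth_mktuple /=.
by rewrite ltn_ord mul0r scaler0.
Qed.

Lemma trivial_syzygy_xzero m (B : 'I_m -> bilin F nx ny) g :
  trivial_syzygy (fun i => quad (B i)) g -> forall k, xzero (g k) = 0.
Proof.
move=> [h g_def] k; rewrite g_def raddf_sum big1 // => i _.
rewrite raddf_sum big1 // => j _.
by rewrite /= rmorphM rmorphB !rmorphM /= !xzero_quad !mul0r subrr mulr0.
Qed.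

Lemma trivial_syzygy0 m (Bt : 'I_m -> bilin F nx ny) g :
  (forall i, g i = 0) -> trivial_syzygy Bt g.
Proof.
move=> g0; exists (fun _ _ => 0) => k; rewrite g0 big1 // => i _.
by rewrite big1 // => j _; rewrite mul0r.
Qed.

Lemma trivial_ysyzygy_eq0 m (B : 'I_m -> bilin F nx ny) g :
  (forall i, is_ypoly (g i)) -> trivial_syzygy (fun i => quad (B i)) g ->
  forall i, g i = 0.
Proof.
by move=> g_y g_triv i; rewrite -(xzero_ypoly (g_y i)) (trivial_syzygy_xzero g_triv).
Qed.

End TrivialSyzygies.

Lemma ltr_div_add1_natr (R : numFieldType) (a b d : nat) : (0 < b)%N -> (0 < d)%N ->
  (a%:R / b%:R + 1 < d%:R :> R) = (a < (d - 1) * b)%N.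
Proof.
move=> b_gt0 d_gt0; rewrite -[in LHS](subnK d_gt0) natrD ltrD2r.
by rewrite ltr_pdivrMr ?ltr0n // -natrM ltr_nat.
Qed.

Lemma mul_bin_pred_diag n j : (0 < n)%N -> (2 <= j)%N ->
  ('C(n + j - 2, j - 1) * (j - 1) = 'C(n + j - 3, j - 2) * (n + j - 2))%N.
Proof.
case: j => [|[|j]] // n_gt0 _; have := mul_bin_diag (n + j) j.
rewrite (_ : n + j.+2 - 3 = (n + j).-1)%N; last lia.
rewrite (_ : n + j.+2 - 2 = n + j)%N; last lia.
by rewrite !subSS !subn0 mulnC [in RHS]mulnC => <-.
Qed.

Section ColumnsVersusRows.
Variables (nx ny m j : nat).
Hypotheses (ny_gt0 : (0 < ny)%N) (nx_le_m : (nx <= m)%N) (j_ge2 : (2 <= j)%N).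

Let cols_scaled :
  (nx * 'C(ny + j - 2, j - 1) * (j - 1) = nx * (ny + j - 2) * 'C(ny + j - 3, j - 2))%N.
Proof. by rewrite -mulnA mul_bin_pred_diag // mulnA mulnAC. Qed.

Lemma ltn_cols_rows :
  (nx * 'C(ny + j - 2, j - 1) < m * 'C(ny + j - 3, j - 2))%N =
  (nx * (ny - 1) < (j - 1) * (m - nx))%N.
Proof.
rewrite -(ltn_pmul2r (_ : 0 < j - 1)%N); last lia.
rewrite cols_scaled [(m * _ * _)%N]mulnAC ltn_pmul2r ?bin_gt0; last lia.
by apply/idP/idP; nia.
Qed.

Lemma leq_cols_rows :
  (nx * 'C(ny + j - 2, j - 1) <= m * 'C(ny + j - 3, j - 2))%N =
  (nx * (ny - 1) <= (j - 1) * (m - nx))%N.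
Proof.
rewrite -(leq_pmul2r (_ : 0 < j - 1)%N); last lia.
rewrite cols_scaled [(m * _ * _)%N]mulnAC leq_pmul2r ?bin_gt0; last lia.
by apply/idP/idP; nia.
Qed.

End ColumnsVersusRows.

Section Macaulay.
Variables (F : fieldType) (nx ny m : nat) (B : 'I_m -> bilin F nx ny) (j : nat).
Local Notation Bt := (fun i => quad (B i)).
Local Notation ymon k := (ymon_deg ny k).
Local Notation rows := ('I_m * ymon (j - 2))%type.

Definition syz_of_row (v : 'rV[F]_#|{: rows}|) (i : 'I_m) : {mpoly F[nx + ny]} :=
  \sum_(b : ymon (j - 2)) v 0 (enum_rank (i, b)) *: ymono F nx (val (val b)).

Lemma mcoeff_syz_of_row v i c : (syz_of_row v i)@_c =
  \sum_(b : ymon (j - 2)) v 0 (enum_rank (i, b)) * (ymnm nx (val (val b)) == c)%:R.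
Proof.
rewrite raddf_sum; apply: eq_bigr => b _.
by rewrite /= mcoeffZ ymonoE mcoeffX.
Qed.

Lemma syz_of_row_ypoly v i : is_ypoly (syz_of_row v i).
Proof.
move=> c; rewrite mcoeff_msupp mcoeff_syz_of_row => /eqP c_supp k.
apply/eqP/negP => /negP c_k; apply: c_supp; apply: big1 => b _.
have [e|_] := eqVneq (ymnm nx (val (val b))) c; last by rewrite mulr0.
by rewrite -e ymnm_lshift in c_k.
Qed.

Lemma syz_of_row_homog v i : syz_of_row v i \is (j - 2).-homog.
Proof.
apply: rpred_sum => b _; apply: rpredZ.
by have := ymono_homog F nx (val (val b)); rewrite (eqP (valP b)).
Qed.

Lemma syz_of_row_eq0 v : (forall i, syz_of_row v i = 0) -> v = 0.
Proof.
move=> v0; apply/rowP => r; rewrite mxE -[r]enum_valK; case: (enum_val r) => i b.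
have := congr1 (mcoeff (ymnm nx (val (val b)))) (v0 i).
rewrite mcoeff_syz_of_row mcoeff0 (bigD1 b) //= eqxx mulr1 big1 ?addr0 // => b' b'b.
case: eqP => [/ymnm_inj eb|]; rewrite ?mulr0 //.
by case/eqP: b'b; do 2 apply: val_inj.
Qed.

Lemma ysyzygy_syz_of_row g : (forall i, is_ypoly (g i) /\ g i \is (j - 2).-homog) ->
  exists v, forall i, g i = syz_of_row v i.
Proof.
move=> g_yh; exists (\row_r (g (enum_val r).1)@_(ymnm nx (val (val (enum_val r).2)))).
move=> i; have [g_y g_h] := g_yh i; rewrite {1}(ypoly_homogE g_y g_h).
by apply: eq_bigr => b _; rewrite mxE enum_rankK.
Qed.

Lemma mulmx_My_mcoeff v c : (v *m My j Bt) 0 c =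
  (\sum_i syz_of_row v i * bpoly (Bt i))@_(bmnm (enum_val c)).
Proof.
rewrite mxE (reindex (@enum_rank _)) /=; last first.
  by apply: onW_bij; exists enum_val => x; [exact: enum_rankK | exact: enum_valK].
rewrite raddf_sum /=.
under [RHS]eq_bigr => i _ do rewrite mulr_suml raddf_sum /=.
rewrite pair_bigA /=; apply: eq_bigr => -[i b] _ /=.
by rewrite mxE enum_rankK -scalerAl mcoeffZ.
Qed.

Lemma is_syzygy_syz_of_row v : (2 <= j)%N ->
  is_syzygy Bt (syz_of_row v) <-> v *m My j Bt = 0.
Proof.
move=> j_ge2; split => [syz|vM0].
  by apply/rowP => c; rewrite mulmx_My_mcoeff syz mcoeff0 mxE.
apply/mpolyP => c; rewrite mcoeff0.
have [c_le|c_gt] := boolP (mdeg c < j.+1)%N.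
  by have := mulmx_My_mcoeff v (enum_rank (BMultinom c_le)); rewrite enum_rankK vM0 mxE.
apply: (@dhomog_nemf_coeff _ _ mdeg j); last by apply: contra c_gt => /eqP ->.
apply: rpred_sum => i _; rewrite -[j](subnK j_ge2).
exact: dhomogM (syz_of_row_homog v i) (quad_homog (B i)).
Qed.

Lemma My_rank_lt_y_degree_fall : (2 <= j)%N -> (\rank (My j Bt) < #|{: rows}|)%N ->
  y_degree_fall B j.
Proof.
move=> j_ge2 rank_lt; split=> //.
have /rowV0Pn [v /sub_kermxP vM0 v_neq0] : kermx (My j Bt) != 0.
  by rewrite kermx_eq0 /row_free neq_ltn rank_lt.
exists (syz_of_row v); split; [|split].
- by move=> i; split; [exact: syz_of_row_ypoly | exact: syz_of_row_homog].
- exact/is_syzygy_syz_of_row.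
move=> /(trivial_ysyzygy_eq0 (@syz_of_row_ypoly v)) /syz_of_row_eq0 v0.
by rewrite v0 eqxx in v_neq0.
Qed.

Lemma My_full_row_rank_ysyzygy_eq0 g : (2 <= j)%N ->
  \rank (My j Bt) = #|{: rows}| ->
  (forall i, is_ypoly (g i) /\ g i \is (j - 2).-homog) ->
  is_syzygy Bt g -> forall i, g i = 0.
Proof.
move=> j_ge2 full g_yh; have [v g_v] := ysyzygy_syz_of_row g_yh.
rewrite /is_syzygy; under eq_bigr do rewrite g_v.
move=> /(is_syzygy_syz_of_row v j_ge2) /eqP; rewrite mulmx_free_eq0 /row_free ?full //.
by move=> /eqP v0 i; rewrite g_v v0 /syz_of_row big1 // => b _; rewrite mxE scale0r.
Qed.

Local Notation xycols := ('I_nx * ymon (j - 1))%type.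

Definition My_lfactor : 'M[F]_(#|{: rows}|, #|{: xycols}|) := \matrix_(r, t)
  \sum_(l < ny) bA (B (enum_val r).1) (enum_val t).1 l *
     ((val (val (enum_val r).2) + U_(l))%MM == val (val (enum_val t).2))%:R.

Definition My_rfactor : 'M[F]_(#|{: xycols}|, #|{: 'X_{1..(nx + ny) < j.+1}}|) :=
  \matrix_(t, c) (xymnm (enum_val t).1 (val (val (enum_val t).2)) == bmnm (enum_val c))%:R.

Lemma My_factor : (2 <= j)%N -> My j Bt = My_lfactor *m My_rfactor.
Proof.
move=> j_ge2; apply/matrixP => r c; rewrite !mxE /=.
rewrite (reindex (@enum_rank _)) /=; last first.
  by apply: onW_bij; exists enum_val => x; [exact: enum_rankK | exact: enum_valK].
under eq_bigr => t _ do rewrite !mxE enum_rankK.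
move: (enum_val r) (bmnm (enum_val c)) => [i mm] c' /=.
rewrite mcoeff_ymono_quad -(pair_bigA _ (fun k b => (\sum_(l < ny) bA (B i) k l *
     ((val (val mm) + U_(l))%MM == val (val b))%:R) * (xymnm k (val (val b)) == c')%:R)).
apply: eq_bigr => k _; under [RHS]eq_bigr do rewrite mulr_suml.
rewrite exchange_big /=; apply: eq_bigr => l _.
rewrite (@sum_ymon_deg_pred1 F ny (j - 1) (val (val mm) + U_(l))%MM
  (fun mu => bA (B i) k l * ((val (val mm) + U_(l))%MM == mu)%:R * (xymnm k mu == c')%:R)).
- by rewrite eqxx mulr1.
- by rewrite mdegD mdeg1 (eqP (valP mm)); lia.
by move=> mu /negbTE; rewrite eq_sym => ->; rewrite mulr0 mul0r.
Qed.

Lemma rank_My_le : (0 < ny)%N -> (2 <= j)%N ->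
  (\rank (My j Bt) <= nx * 'C(ny + j - 2, j - 1))%N.
Proof.
move=> ny_gt0 j_ge2; rewrite (My_factor j_ge2).
apply: leq_trans (mulmx_max_rank _ _) _.
by rewrite card_prod card_ord card_ymon_deg // (_ : j - 1 + ny.-1 = ny + j - 2)%N //; lia.
Qed.

Lemma card_My_rows : (0 < ny)%N -> (2 <= j)%N ->
  #|{: rows}| = (m * 'C(ny + j - 3, j - 2))%N.
Proof.
move=> ny_gt0 j_ge2.
by rewrite card_prod card_ord card_ymon_deg // (_ : j - 2 + ny.-1 = ny + j - 3)%N //; lia.
Qed.

End Macaulay.

Lemma y_semiregular_full_row_rank (F : fieldType) nx ny m (B : 'I_m -> bilin F nx ny) j :
  (0 < ny)%N -> (nx < m)%N -> y_semiregular (fun i => quad (B i)) ->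
  (2 <= j)%N -> ((j - 1) * (m - nx) <= nx * (ny - 1))%N ->
  \rank (My j (fun i => quad (B i))) = (m * 'C(ny + j - 3, j - 2))%N.
Proof.
move=> ny_gt0 nx_lt_m [d0 [[d0_ge2 [full_d0 _]] reg]] j_ge2 j_below.
have nx_le_m := ltnW nx_lt_m.
have [j_lt_d0|d0_le_j] := ltnP j d0; first by apply: (reg _ j_lt_d0); rewrite j_ge2 leqnn.
have cols_le_rows : (nx * 'C(ny + d0 - 2, d0 - 1) <= m * 'C(ny + d0 - 3, d0 - 2))%N.
  by rewrite -full_d0 -card_My_rows // rank_leq_row.
have j_d0 : j = d0.
  have : ((j - 1) * (m - nx) <= (d0 - 1) * (m - nx))%N.
    by apply: (leq_trans j_below); rewrite -leq_cols_rows.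
  rewrite leq_pmul2r ?subn_gt0 //; lia.
rewrite j_d0 in j_below *; rewrite full_d0; apply/eqP; rewrite eqn_leq cols_le_rows.
by rewrite leqNgt ltn_cols_rows // -leqNgt.
Qed.

Unset Implicit Arguments.

Theorem proposition4 (F : finFieldType) (nx ny m : nat) :
  (0 < nx)%N -> (0 < ny)%N -> (0 < m)%N -> (nx + ny <= m)%N ->
  forall B : 'I_m -> bilin F nx ny,
  y_semiregular (fun i => quad (B i)) ->
  forall d : nat,
    (0 < d)%N ->
    ((nx * (ny - 1))%:R / (m - nx)%:R + 1 < (d%:R : rat)) ->
    (forall d' : nat, (0 < d')%N ->
       ((nx * (ny - 1))%:R / (m - nx)%:R + 1 < (d'%:R : rat)) -> (d <= d')%N) ->
    y_first_fall_degree B d.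
Proof.
move=> _ ny_gt0 _ nxny_le_m B semireg d d_gt0 d_bound d_min.
have nx_lt_m : (nx < m)%N by lia.
have nx_le_m := ltnW nx_lt_m.
have m_nx_gt0 : (0 < m - nx)%N by rewrite subn_gt0.
rewrite ltr_div_add1_natr // in d_bound.
have d_ge2 : (2 <= d)%N by nia.
split.
  apply: My_rank_lt_y_degree_fall => //.
  apply: leq_ltn_trans (rank_My_le B ny_gt0 d_ge2) _.
  by rewrite card_My_rows // ltn_cols_rows.
move=> d' d'_lt_d [d'_ge2 [g [g_yh [g_syz g_nontriv]]]]; apply: g_nontriv.
have d'_below : ((d' - 1) * (m - nx) <= nx * (ny - 1))%N.
  rewrite leqNgt; apply: contraTN d'_lt_d => d'_bound.
  by rewrite -leqNgt d_min ?ltr_div_add1_natr //; lia.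
apply: trivial_syzygy0; apply: My_full_row_rank_ysyzygy_eq0 g_yh g_syz => //.
by rewrite [RHS]card_My_rows // y_semiregular_full_row_rank.
Qed.
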